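(* For every planar forest $F$, $\Delta(F)=\sum_{c\in \mathrm{Adm}^l(F)}P^c(F)\otimes R^c(F)+F\otimes 1+1\otimes F$.
   Context: Planar rooted trees have their children linearly ordered left to right; a planar forest is a finite, possibly empty, sequence of planar rooted trees ($1$ = empty forest); $\mathcal{H}$ is the free associative unital algebra over a field $K$ on planar rooted trees, with basis the planar forests and product concatenation. $B^+(F)$ is the tree obtained by grafting the trees of the forest $F$ (in order) on a new common root; $\varepsilon(F)=\delta_{F,1}$. $\Delta:\mathcal{H}\to\mathcal{H}\otimes\mathcal{H}$ is the unique linear map with $\Delta(1)=1\otimes1$, $\Delta(xy)=(x\otimes1)\Delta(y)+\Delta(x)(1\otimes y)-x\otimes y$ and $\Delta(B^+(x))=B^+(x)\otimes 1+(\mathrm{Id}\otimes B^+)\Delta(x)$ for all $x,y\in\mathcal{H}$. Orders on the vertices of a nonempty forest $F=t_1\cdots t_n$: $s\geq_{high}s'$ iff $s'=s$ or $s'$ is an ancestor of $s$. If $s,s'$ are incomparable for $\geq_{high}$, then $s\geq_{left}s'$ iff either $s\in t_i$, $s'\in t_j$ with $i<j$, or $s,s'$ lie in the same $t_i$ and $s\geq_{left}s'$ in the forest obtained from $t_i$ by deleting its root (recursive definition). $s\geq_{h,l}s'$ iff $s\geq_{high}s'$ or $s\geq_{left}s'$; this is a total order. Admissible cuts: add to each tree of $F$ an imaginary edge below its root. An admissible cut $c$ is a nonempty set of edges (real edges or imaginary root-edges) such that every path from the base of a tree to a leaf contains at most one edge of $c$, and which is not the total cut (consisting of all root-edges). $P^c(F)$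 is the planar forest formed by the vertices lying above an edge of $c$ (i.e. whose path to the base contains an edge of $c$), and $R^c(F)$ the planar forest formed by the remaining vertices, with induced edges and left-right orders. Writing the vertices of $F$ as $s_1\geq_{h,l}\cdots\geq_{h,l}s_n$, an admissible cut $c$ is left-admissible if there is $k$ such that the vertices of $P^c(F)$ are exactly $s_1,\dots,s_k$; $\mathrm{Adm}^l(F)$ is the set of left-admissible cuts. *)

From HB Require Import structures.
From mathcomp Require Import all_boot all_algebra.
Set Implicit Arguments. Unset Strict Implicit. Unset Printing Implicit Defensive.
Import GRing.Theory.

Inductive tree : Type := Node of seq tree.
Definition forest := seq tree.
Definition Bplus (F : forest) : tree := Node F.

Fixpoint tree_enc (t : tree) : GenTree.tree unit :=
  let: Node ts := t in GenTree.Node 0 (map tree_enc ts).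
Fixpoint tree_dec (g : GenTree.tree unit) : tree :=
  match g with
  | GenTree.Leaf _ => Node [::]
  | GenTree.Node _ gs => Node (map tree_dec gs)
  end.
Lemma tree_encK_aux : forall t, tree_dec (tree_enc t) = t.
Proof.
fix IH 1; case=> ts /=; congr Node.
elim: ts => [|t ts IHts] //=; by rewrite IH IHts.
Qed.
Lemma tree_encK : cancel tree_enc tree_dec.
Proof. exact: tree_encK_aux. Qed.
HB.instance Definition _ := Countable.copy tree (can_type tree_encK).

(* The vertex with path [:: i] is the root of the i-th tree; [:: i & p] is the
   vertex with path p in the forest obtained from the i-th tree by deleting its
   root.  An edge (real or imaginary root edge) is identified with the vertex
   just above it. *)
Fixpoint tverts (t : tree) : seq (seq nat) :=
  let: Node ts := t in
  [::] :: (fix fv (ts : seq tree) (i : nat) : seq (seq nat) :=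
             match ts with
             | [::] => [::]
             | t' :: ts' => map (cons i) (tverts t') ++ fv ts' i.+1
             end) ts 0.
Fixpoint fverts_from (F : forest) (i : nat) : seq (seq nat) :=
  match F with
  | [::] => [::]
  | t :: F' => map (cons i) (tverts t) ++ fverts_from F' i.+1
  end.
Definition fverts (F : forest) := fverts_from F 0.
Definition nv (F : forest) := size (fverts F).
Definition vtx (F : forest) (i : 'I_(nv F)) : seq nat := nth [::] (fverts F) i.

(* A cut is a set of edges, i.e. a set of (indices of) vertices. *)
Definition cutp (F : forest) (c : {set 'I_(nv F)}) : pred (seq nat) :=
  fun p => [exists i in c, vtx i == p].

(* R^c : remove the vertices lying above an edge of c *)
Fixpoint tR (cp : pred (seq nat)) (p : seq nat) (t : tree) : tree :=
  let: Node ts := t in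
  Node ((fix fR (ts : seq tree) (i : nat) : forest :=
          match ts with
          | [::] => [::]
          | t' :: ts' => (if cp (rcons p i) then [::]
                          else [:: tR cp (rcons p i) t']) ++ fR ts' i.+1
          end) ts 0).
Fixpoint fR_from (cp : pred (seq nat)) (F : forest) (i : nat) : forest :=
  match F with
  | [::] => [::]
  | t :: F' => (if cp [:: i] then [::] else [:: tR cp [:: i] t]) ++ fR_from cp F' i.+1
  end.
(* P^c : the subtrees above the edges of c, in left-to-right order *)
Fixpoint tP (cp : pred (seq nat)) (p : seq nat) (t : tree) : forest :=
  let: Node ts := t in
  (fix fP (ts : seq tree) (i : nat) : forest :=
     match ts with
     | [::] => [::]
     | t' :: ts' => (if cp (rcons p i) then [:: t'] else tP cp (rcons p i) t')
                    ++ fP ts' i.+1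
     end) ts 0.
Fixpoint fP_from (cp : pred (seq nat)) (F : forest) (i : nat) : forest :=
  match F with
  | [::] => [::]
  | t :: F' => (if cp [:: i] then [:: t] else tP cp [:: i] t) ++ fP_from cp F' i.+1
  end.

Definition Rcut (F : forest) (c : {set 'I_(nv F)}) : forest := fR_from (cutp c) F 0.
Definition Pcut (F : forest) (c : {set 'I_(nv F)}) : forest := fP_from (cutp c) F 0.

Definition admissible (F : forest) (c : {set 'I_(nv F)}) : bool :=
  [&& c != set0,
      [forall i in c, forall j in c, (i != j) ==> ~~ prefix (vtx i) (vtx j)]
    & ~~ [forall i, (i \in c) == (size (vtx i) == 1)]].

Definition Pvert (F : forest) (c : {set 'I_(nv F)}) (v : seq nat) : bool :=
  [exists i in c, prefix (vtx i) v].

Definition ge_high (s s' : seq nat) : bool := prefix s' s.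
Fixpoint ge_left (s s' : seq nat) : bool :=
  match s, s' with
  | i :: s1, j :: s1' => (i < j) || ((i == j) && ge_left s1 s1')
  | _, _ => false
  end.
Definition ge_hl (s s' : seq nat) : bool :=
  ge_high s s' || [&& ~~ ge_high s s', ~~ ge_high s' s & ge_left s s'].
Definition sorted_verts (F : forest) : seq (seq nat) := sort ge_hl (fverts F).

Definition left_admissible (F : forest) (c : {set 'I_(nv F)}) : bool :=
  admissible c &&
  [exists k : 'I_(nv F).+1,
     all (fun v => Pvert c v == (v \in take k (sorted_verts F))) (fverts F)].

(* ---------- Tensors H (x) H as coefficient functions on pairs of forests ---- *)
Section Tens.
Variable K : fieldType.
Definition tens := forest -> forest -> K.
Local Open Scope ring_scope.
Definition tsimple (F G : forest) : tens := fun A B => ((A == F) && (B == G))%:R.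
(* (F (x) 1) t *)
Definition tlmul (F : forest) (t : tens) : tens :=
  fun A B => if take (size F) A == F then t (drop (size F) A) B else 0.
(* t (1 (x) G) *)
Definition trmul (t : tens) (G : forest) : tens :=
  fun A B => if (size G <= size B)%N && (drop (size B - size G) B == G)
             then t A (take (size B - size G) B) else 0.
(* (Id (x) B^+) t *)
Definition tidB (t : tens) : tens :=
  fun A B => if B is [:: Node S0] then t A S0 else 0.

Definition is_Delta (D : forest -> tens) : Prop :=
  [/\ D [::] = tsimple [::] [::],
      forall x y : forest, forall A B,
        D (x ++ y) A B = tlmul x (D y) A B + trmul (D x) y A B - tsimple x y A B
    & forall x : forest, forall A B,
        D [:: Bplus x] A B = tsimple [:: Bplus x] [::] A B + tidB (D x) A B].
End Tens.

From HB Require Import structures.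
From mathcomp Require Import all_boot all_algebra.
From mathcomp Require Import zify.
Set Implicit Arguments. Unset Strict Implicit. Unset Printing Implicit Defensive.

(* Listing the vertices in decreasing [>=_{h,l}] order is postorder.
   The vertices above a left-admissible cut are the first [k] of this list,
   with [0 < k < |F|], and conversely the first [k] vertices are upward closed,
   so they lie above a unique antichain cut, which is left-admissible.  Hence
   the sum over left-admissible cuts is the sum over [0 < k < |F|] of the
   split of [F] after its first [k] vertices in postorder.  Summing these
   splits over all [0 <= k <= |F|] gives a map that satisfies the recursion
   defining [Delta] on [B^+] and on concatenations, so it is [Delta]; the
   terms [k = 0] and [k = |F|] are [1 (x) F] and [F (x) 1]. *)

(** * Vertices and their order *)

Fixpoint tree_size (t : tree) : nat := let: Node ts := t in (sumn (map tree_size ts)).+1.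
Definition forest_size (F : forest) : nat := sumn (map tree_size F).

Lemma forest_size_cons ts G :
  forest_size (Node ts :: G) = (forest_size ts).+1 + forest_size G.
Proof. by []. Qed.

Lemma forest_ind (P : forest -> Prop) :
  P [::] -> (forall ts G, P ts -> P G -> P (Node ts :: G)) -> forall F, P F.
Proof.
move=> P0 Pcons F; have [n] := ubnP (forest_size F).
elim: n F => // n IH [|[ts] G] //; rewrite forest_size_cons => ltF.
by apply: Pcons; apply: IH; lia.
Qed.

Lemma fverts_cons ts G i : fverts_from (Node ts :: G) i =
  [:: i] :: map (cons i) (fverts_from ts 0) ++ fverts_from G i.+1.
Proof. by []. Qed.

Lemma mem_fverts_from F i v :
  v \in fverts_from F i -> exists j w, v = j :: w /\ i <= j.
Proof.
elim/forest_ind: F i v => [//|ts G _ IHG] i v.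
rewrite fverts_cons inE mem_cat => /or3P[/eqP->|/mapP[w _ ->]|/IHG[j [w [-> le]]]].
- by exists i, [::].
- by exists i, w.
- by exists j, w; split => //; lia.
Qed.

Lemma fverts_from_root F i v :
  v \in fverts_from F i -> [:: head 0 v] \in fverts_from F i.
Proof.
elim/forest_ind: F i v => [//|ts G _ IHG] i v.
rewrite !fverts_cons !inE !mem_cat => /or3P[/eqP->|/mapP[w _ ->]|/IHG->];
  by rewrite ?eqxx ?orbT.
Qed.

Lemma size_fverts_from F i : size (fverts_from F i) = forest_size F.
Proof.
elim/forest_ind: F i => [//|ts G IHts IHG] i.
by rewrite fverts_cons /= size_cat size_map IHts IHG.
Qed.

Lemma uniq_fverts_from F i : uniq (fverts_from F i).
Proof.
elim/forest_ind: F i => [//|ts G IHts IHG] i.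
rewrite fverts_cons cons_uniq mem_cat negb_or cat_uniq IHG andbT.
rewrite map_inj_uniq ?IHts; last by move=> x y [].
apply/and3P; split => //.
- apply/andP; split.
  + by apply/mapP => -[w /mem_fverts_from[j [w' [-> _]]]].
  + by apply/negP => /mem_fverts_from[j [w [[e _] le]]]; lia.
- by apply/hasP => -[v /mem_fverts_from[j [w [-> le]]]] /mapP[u _ [e _]]; lia.
Qed.

Lemma nvE F : nv F = forest_size F.
Proof. exact: size_fverts_from. Qed.

Lemma uniq_fverts F : uniq (fverts F).
Proof. exact: uniq_fverts_from. Qed.

(* [ge_hl] as a lexicographic comparison in which an ancestor is smaller than
   its descendants; sorting by it lists the vertices in postorder. *)
Fixpoint hl_ge (s s' : seq nat) : bool :=
  match s, s' with
  | _, [::] => true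
  | [::], _ :: _ => false
  | i :: s1, j :: s1' => (i < j) || ((i == j) && hl_ge s1 s1')
  end.

Lemma ge_hlE s s' : ge_hl s s' = hl_ge s s'.
Proof.
elim: s s' => [|i s IH] [|j s'] //=.
rewrite /ge_hl /ge_high !prefix_cons /= -IH /ge_hl /ge_high [j == i]eq_sym.
by case: (ltngtP i j) => //= _; case: (prefix s' s); case: (prefix s s').
Qed.

Lemma hl_ge_total : total hl_ge.
Proof.
elim=> [|i s IH] [|j s'] //=.
by rewrite [j == i]eq_sym; case: ltngtP => //= _; exact: IH.
Qed.

Lemma hl_ge_anti s s' : hl_ge s s' -> hl_ge s' s -> s = s'.
Proof.
elim: s s' => [|i s IH] [|j s'] //=.
by rewrite [j == i]eq_sym; case: ltngtP => //= -> H1 H2; rewrite (IH _ H1 H2).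
Qed.

Lemma hl_ge_trans : transitive hl_ge.
Proof.
move=> y x z; elim: x y z => [|i x IH] [|j y] [|k z] //=.
case/orP=> [lt1|/andP[/eqP-> H1]] /orP[lt2|/andP[/eqP<- H2]].
- by rewrite (ltn_trans lt1 lt2).
- by rewrite lt1.
- by rewrite lt2.
- by rewrite ltnn eqxx (IH _ _ H1 H2) orbT.
Qed.

Lemma hl_ge_prefix s s' : prefix s' s -> hl_ge s s'.
Proof.
elim: s s' => [|i s IH] [|j s'] //.
by rewrite prefix_cons => /andP[/eqP-> /IH] /= ->; rewrite eqxx orbT.
Qed.

Lemma ge_hl_total : total ge_hl.
Proof. by move=> s s'; rewrite !ge_hlE hl_ge_total. Qed.

Lemma ge_hl_trans : transitive ge_hl.
Proof. by move=> s' s s''; rewrite !ge_hlE; apply: hl_ge_trans. Qed.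

(** * Splitting a forest in postorder *)

(* [fsplit F k] splits [F] into the forest of its first [k] vertices in
   postorder and the forest of the remaining ones. *)
Fixpoint tsplit (t : tree) (k : nat) : forest * forest :=
  let: Node ts := t in
  let s := (fix fs (F : forest) (k : nat) : forest * forest :=
    match F with
    | [::] => ([::], [::])
    | t' :: G => if k < tree_size t' then ((tsplit t' k).1, (tsplit t' k).2 ++ G)
                 else let s := fs G (k - tree_size t') in (t' :: s.1, s.2)
    end) ts k in
  if k < tree_size t then (s.1, [:: Node s.2]) else ([:: t], [::]).

Fixpoint fsplit (F : forest) (k : nat) : forest * forest :=
  match F with
  | [::] => ([::], [::])
  | t :: G => if k < tree_size t then ((tsplit t k).1, (tsplit t k).2 ++ G)
              else let s := fsplit G (k - tree_size t) in (t :: s.1, s.2)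
  end.

Lemma fsplit_cons ts G k : fsplit (Node ts :: G) k =
  if k < (forest_size ts).+1 then ((fsplit ts k).1, Node (fsplit ts k).2 :: G)
  else (Node ts :: (fsplit G (k - (forest_size ts).+1)).1,
        (fsplit G (k - (forest_size ts).+1)).2).
Proof.
have tsplitE : tsplit (Node ts) k = if k < (forest_size ts).+1
    then ((fsplit ts k).1, [:: Node (fsplit ts k).2]) else ([:: Node ts], [::]).
  by rewrite /=; elim: ts k.
have -> : fsplit (Node ts :: G) k =
    if k < tree_size (Node ts) then ((tsplit (Node ts) k).1, (tsplit (Node ts) k).2 ++ G)
    else (Node ts :: (fsplit G (k - tree_size (Node ts))).1,
          (fsplit G (k - tree_size (Node ts))).2) by [].
by rewrite tsplitE; case: ifP => //= ->.
Qed.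

Lemma fsplit0 F : fsplit F 0 = ([::], F).
Proof. by elim/forest_ind: F => // ts G IHts _; rewrite fsplit_cons /= IHts. Qed.

Lemma fsplit_size F : fsplit F (forest_size F) = (F, [::]).
Proof.
elim/forest_ind: F => // ts G _ IHG.
by rewrite fsplit_cons forest_size_cons ltnNge leq_addr /= addKn IHG.
Qed.

Section CutForests.

Variable cp : pred (seq nat).

(* The parts of [P^c] and [R^c] coming from the trees of [F], where these are
   the children of the vertex [p] numbered from [i] on. *)
Fixpoint Pchildren (p : seq nat) (F : forest) (i : nat) : forest :=
  if F is t :: G then
    (if cp (rcons p i) then [:: t] else tP cp (rcons p i) t) ++ Pchildren p G i.+1
  else [::].

Fixpoint Rchildren (p : seq nat) (F : forest) (i : nat) : forest :=
  if F is t :: G then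
    (if cp (rcons p i) then [::] else [:: tR cp (rcons p i) t]) ++ Rchildren p G i.+1
  else [::].

Lemma Pchildren_cons p t G i : Pchildren p (t :: G) i =
  (if cp (rcons p i) then [:: t] else tP cp (rcons p i) t) ++ Pchildren p G i.+1.
Proof. by []. Qed.

Lemma Rchildren_cons p t G i : Rchildren p (t :: G) i =
  (if cp (rcons p i) then [::] else [:: tR cp (rcons p i) t]) ++ Rchildren p G i.+1.
Proof. by []. Qed.

Lemma tP_Node p ts : tP cp p (Node ts) = Pchildren p ts 0.
Proof. by rewrite /=; elim: ts 0 => //= t ts IH i; rewrite IH. Qed.

Lemma tR_Node p ts : tR cp p (Node ts) = Node (Rchildren p ts 0).
Proof. by rewrite /=; congr Node; elim: ts 0 => //= t ts IH i; rewrite IH. Qed.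

Lemma fP_fromE F i : fP_from cp F i = Pchildren [::] F i.
Proof. by elim: F i => //= t F IH i; rewrite IH. Qed.

Lemma fR_fromE F i : fR_from cp F i = Rchildren [::] F i.
Proof. by elim: F i => //= t F IH i; rewrite IH. Qed.

End CutForests.

(* A cut and its upward closure [U] give the same forests. *)
Lemma children_upward_closure (cp U : pred (seq nat)) :
  (forall q j, ~~ U q -> U (rcons q j) = cp (rcons q j)) ->
  forall F p i, ~~ U p ->
  (Pchildren cp p F i, Rchildren cp p F i) = (Pchildren U p F i, Rchildren U p F i).
Proof.
move=> UE; elim/forest_ind=> // ts G IHts IHG p i Up.
rewrite !Pchildren_cons !Rchildren_cons -(UE _ _ Up) !tP_Node !tR_Node.
have [-> ->] := IHG p i.+1 Up.
by case: ifPn => // /IHts-/(_ 0) [-> ->].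
Qed.

Lemma children_upper_set (U : pred (seq nat)) F p i :
  {in fverts_from F i &, forall v w, hl_ge w v -> U (p ++ v) -> U (p ++ w)} ->
  (Pchildren U p F i, Rchildren U p F i) =
    fsplit F (count (fun v => U (p ++ v)) (fverts_from F i)).
Proof.
elim/forest_ind: F p i => // ts G IHts IHG p i Uup.
have mem_root : [:: i] \in fverts_from (Node ts :: G) i by rewrite fverts_cons mem_head.
have mem_ts w : w \in fverts_from ts 0 -> i :: w \in fverts_from (Node ts :: G) i.
  by move=> hw; rewrite fverts_cons inE mem_cat map_f ?orbT.
have mem_G v : v \in fverts_from G i.+1 -> v \in fverts_from (Node ts :: G) i.
  by move=> hv; rewrite fverts_cons inE mem_cat hv !orbT.
have IG := IHG p i.+1; rewrite {IHG} -/(count _ _) in IG.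
have {}IG := IG (fun v w hv hw => Uup v w (mem_G v hv) (mem_G w hw)).
rewrite Pchildren_cons Rchildren_cons tP_Node tR_Node fverts_cons [count _ _]/=.
rewrite count_cat count_map (eq_count (a2 := fun w => U (rcons p i ++ w))); last first.
  by move=> w; rewrite /= cat_rcons.
rewrite cats1 fsplit_cons; case: ifPn => [Ui | nUi].
- have -> : count (fun w => U (rcons p i ++ w)) (fverts_from ts 0) = forest_size ts.
    rewrite -(size_fverts_from ts 0) -count_predT; apply: eq_in_count => w hw.
    rewrite /= cat_rcons; apply: (Uup [:: i] (i :: w)) => //; first exact: mem_ts.
      exact: hl_ge_prefix (prefix_prefix [:: i] w).
    by rewrite cats1.
  by rewrite ltnNge add1n leq_addr /= subSS addKn -IG.
- have cG0 : count (fun v => U (p ++ v)) (fverts_from G i.+1) = 0.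
    apply/eqP; rewrite eqn0Ngt -has_count; apply/hasP => -[v hv Uv].
    have [j [w [ev lt]]] := mem_fverts_from hv; case/negP: nUi.
    rewrite -cats1; apply: (Uup v) => //; first exact: mem_G.
    by rewrite ev /= lt.
  move: IG; rewrite cG0 add0n addn0 fsplit0 => -[-> ->] /=.
  rewrite ltnS -(size_fverts_from ts 0) count_size cats0.
  rewrite -IHts // => v w hv hw hvw; rewrite !cat_rcons.
  by apply: Uup; rewrite ?mem_ts //= ltnn eqxx.
Qed.

(** * Cuts *)

Lemma prefix_size_anti (s s' : seq nat) : prefix s s' -> size s' <= size s -> s = s'.
Proof. by rewrite prefixE => /eqP e le; rewrite -e take_oversize. Qed.

Lemma prefix_rconsE (s q : seq nat) j :
  prefix s (rcons q j) = (s == rcons q j) || prefix s q.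
Proof.
elim: q s => [|x q IH] [|y s] //=.
- by case: s => [|z s]; rewrite /= ?orbF ?eqseq_cons ?andbT ?andbF.
- by rewrite IH eqseq_cons andb_orr.
Qed.

Section Vertices.

Variable F : forest.

Lemma vtx_mem (i : 'I_(nv F)) : vtx i \in fverts F.
Proof. exact: mem_nth. Qed.

Lemma vtx_inj : injective (@vtx F).
Proof.
move=> i j /eqP; rewrite /vtx nth_uniq ?uniq_fverts //.
by move/eqP/val_inj.
Qed.

Lemma vtx_onto v : v \in fverts F -> exists i : 'I_(nv F), vtx i = v.
Proof.
move=> hv; have hi : index v (fverts F) < nv F by rewrite index_mem.
by exists (Ordinal hi); rewrite /vtx nth_index.
Qed.

Lemma vtx_cons (i : 'I_(nv F)) : exists j w, vtx i = j :: w.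
Proof. by have [j [w [e _]]] := mem_fverts_from (vtx_mem i); exists j, w. Qed.

Lemma vtx_root (i : 'I_(nv F)) : exists2 r : 'I_(nv F), vtx r = [:: head 0 (vtx i)]
  & prefix (vtx r) (vtx i).
Proof.
have [r er] := vtx_onto (fverts_from_root (vtx_mem i)).
by exists r; rewrite // er; have [j [w ->]] := vtx_cons i; exact: prefix_prefix [:: j] w.
Qed.

End Vertices.

Section Cuts.

Variables (F : forest) (c : {set 'I_(nv F)}).

Definition antichain : bool :=
  [forall i in c, forall j in c, (i != j) ==> ~~ prefix (vtx i) (vtx j)].

Definition total_cut : bool := [forall i, (i \in c) == (size (vtx i) == 1)].

Lemma Pvert_cut i : i \in c -> Pvert c (vtx i).
Proof. by move=> ic; apply/existsP; exists i; rewrite ic prefix_refl. Qed.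

Lemma Pvert_nil : ~~ Pvert c [::].
Proof.
by apply/existsP => -[i /andP[_]]; rewrite prefixs0; have [j [w ->]] := vtx_cons i.
Qed.

Lemma Pvert_rcons q j :
  ~~ Pvert c q -> Pvert c (rcons q j) = cutp c (rcons q j).
Proof.
move=> nPq; apply/existsP/existsP => -[i /andP[ic hi]]; exists i; rewrite ic /=.
- move: hi; rewrite prefix_rconsE => /orP[// | hi].
  by case/negP: nPq; apply/existsP; exists i; rewrite ic.
- by rewrite (eqP hi) prefix_refl.
Qed.

Lemma cut_split :
  {in fverts F &, forall v w, hl_ge w v -> Pvert c v -> Pvert c w} ->
  (Pcut c, Rcut c) = fsplit F (count (Pvert c) (fverts F)).
Proof.
move=> Pup; rewrite /Pcut /Rcut fP_fromE fR_fromE.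
rewrite (children_upward_closure Pvert_rcons) ?Pvert_nil //.
exact: children_upper_set.
Qed.

Lemma antichain_prefix i l : antichain -> i \in c -> l \in c ->
  prefix (vtx l) (vtx i) -> l = i.
Proof.
move=> /forall_inP/(_ l) ac ic lc pli; apply/eqP; apply: contraT => nli.
by move: ac => /(_ lc)/forall_inP/(_ i ic); rewrite nli pli.
Qed.

Lemma total_cutP : antichain -> total_cut = all (Pvert c) (fverts F).
Proof.
move=> ac; apply/forallP/allP => [tot v /vtx_onto[i <-] | allP i].
  have [r er pri] := vtx_root i.
  by apply/existsP; exists r; rewrite pri (eqP (tot r)) er.
have [r er _] := vtx_root i; have [j [w ew]] := vtx_cons i; rewrite ew /= in er.
have /existsP[l /andP[lc plr]] := allP _ (vtx_mem r).
have elr : vtx l = [:: j].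
  move: plr; rewrite er prefixs1 => /orP[/eqP e | /eqP //].
  by have [? [? e']] := vtx_cons l; rewrite e' in e.
apply/eqP; case: (boolP (i \in c)) => [ic | nic].
- have eli : l = i by apply: antichain_prefix; rewrite // elr ew prefix_prefix.
  by rewrite -eli elr.
- apply/esym/negbTE; apply: contra nic; rewrite ew; case: w ew => //= ew _.
  by rewrite -(vtx_inj (etrans elr (esym ew))).
Qed.

End Cuts.

Lemma antichain_eq F (c c' : {set 'I_(nv F)}) : antichain c -> antichain c' ->
  {in fverts F, Pvert c =1 Pvert c'} -> c = c'.
Proof.
suff sub (d d' : {set 'I_(nv F)}) :
    antichain d -> {in fverts F, Pvert d =1 Pvert d'} -> d \subset d'.
  by move=> ac ac' E; apply/eqP; rewrite eqEsubset !sub // => v /E.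
move=> ad E; apply/subsetP => i id.
have /existsP[j /andP[jd' pji]] : Pvert d' (vtx i) by rewrite -E ?vtx_mem ?Pvert_cut.
have /existsP[l /andP[ld plj]] : Pvert d (vtx j) by rewrite E ?vtx_mem ?Pvert_cut.
have eli := antichain_prefix ad id ld (prefix_trans plj pji); subst l.
by rewrite -(vtx_inj (prefix_size_anti pji (size_prefix plj))).
Qed.

Section FirstCut.

Variable F : forest.

Lemma perm_sorted_verts : perm_eq (sorted_verts F) (fverts F).
Proof. by rewrite /sorted_verts perm_sort. Qed.

Lemma size_sorted_verts : size (sorted_verts F) = nv F.
Proof. exact: perm_size perm_sorted_verts. Qed.

Lemma mem_sorted_verts : sorted_verts F =i fverts F.
Proof. exact: perm_mem perm_sorted_verts. Qed.

Definition first_verts (k : nat) : seq (seq nat) := take k (sorted_verts F).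

Lemma first_verts_up k v w :
  v \in first_verts k -> w \in fverts F -> hl_ge w v -> w \in first_verts k.
Proof.
set S := sorted_verts F => vk wF wv.
have vS : v \in S by exact: mem_take vk.
have wS : w \in S by rewrite mem_sorted_verts.
move: vk; rewrite /first_verts !in_take // => vk.
case: (ltnP (index w S) k) => // kw.
have lt_vw : index v S < index w S by apply: leq_trans kw.
have := sorted_ltn_nth ge_hl_trans [::] (sort_sorted ge_hl_total (fverts F)).
move=> /(_ (index v S) (index w S)); rewrite !inE !index_mem => /(_ vS wS lt_vw).
rewrite !nth_index // ge_hlE => vw.
by rewrite (hl_ge_anti vw wv) ltnn in lt_vw.
Qed.

Lemma count_first_verts k : k <= nv F -> count (mem (first_verts k)) (fverts F) = k.
Proof.
move=> kF; rewrite -(permP perm_sorted_verts) /first_verts.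
set S := sorted_verts F.
have : uniq S by rewrite /S /sorted_verts sort_uniq uniq_fverts.
rewrite -{1 3}(cat_take_drop k S) cat_uniq => /and3P[_ disj _].
rewrite count_cat (eq_in_count (a2 := predT)) // count_predT size_take.
have -> : count (mem (take k S)) (drop k S) = 0.
  by apply/eqP; rewrite eqn0Ngt -has_count.
by rewrite size_sorted_verts; case: ltnP; lia.
Qed.

Definition first_cut (k : nat) : {set 'I_(nv F)} :=
  [set i | (vtx i \in first_verts k) &&
     [forall j, (prefix (vtx j) (vtx i) && (j != i)) ==> (vtx j \notin first_verts k)]].

Lemma Pvert_first_cut k v :
  v \in fverts F -> Pvert (first_cut k) v = (v \in first_verts k).
Proof.
move=> vF; apply/existsP/idP => [[i /andP[]] | vk].
  by rewrite inE => /andP[ik _] /hl_ge_prefix; exact: first_verts_up.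
have [i0 ei0] := vtx_onto vF.
pose P := fun j : 'I_(nv F) => prefix (vtx j) v && (vtx j \in first_verts k).
have P0 : P i0 by rewrite /P ei0 prefix_refl vk.
case: (arg_minnP (fun j => size (vtx j)) P0) => m /andP[mv mk] min_m.
exists m; rewrite mv andbT inE mk /=.
apply/forallP => j; apply/implyP => /andP[jm nj]; apply/negP => jk.
have /min_m size_mj : P j by rewrite /P jk (prefix_trans jm mv).
by rewrite (vtx_inj (prefix_size_anti jm size_mj)) eqxx in nj.
Qed.

Lemma first_cut_antichain k : antichain (first_cut k).
Proof.
apply/forall_inP => i ic; apply/forall_inP => j; rewrite !inE => /andP[_ /forallP/(_ i)].
move: ic; rewrite inE => /andP[-> _]; rewrite eq_sym.
by case: (prefix _ _); case: (j == i).
Qed.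

Lemma count_first_cut k : k <= nv F -> count (Pvert (first_cut k)) (fverts F) = k.
Proof.
move=> kF; rewrite -[RHS](count_first_verts kF).
by apply: eq_in_count => v; apply: Pvert_first_cut.
Qed.

Lemma first_cut_split k :
  k <= nv F -> (Pcut (first_cut k), Rcut (first_cut k)) = fsplit F k.
Proof.
move=> kF; rewrite -[in RHS](count_first_cut kF); apply: cut_split => v w vF wF wv.
by rewrite !Pvert_first_cut //; move/first_verts_up; apply.
Qed.

End FirstCut.

Lemma admissibleE F (c : {set 'I_(nv F)}) :
  admissible c = [&& c != set0, antichain c & ~~ total_cut c].
Proof. by []. Qed.

Lemma first_cut_left_admissible F k :
  0 < k < nv F -> left_admissible (first_cut F k).
Proof.
case/andP=> k_gt0 k_lt; have k_le := ltnW k_lt.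
apply/andP; split; first (rewrite admissibleE; apply/and3P; split).
- have /hasP[v _ /existsP[i /andP[ic _]]] : has (Pvert (first_cut F k)) (fverts F).
    by rewrite has_count (count_first_cut k_le).
  by apply/set0Pn; exists i.
- exact: first_cut_antichain.
- rewrite total_cutP ?first_cut_antichain // all_count count_first_cut //.
  by rewrite neq_ltn k_lt.
- apply/existsP; exists (Ordinal (leq_trans k_lt (leqnSn _))).
  by apply/allP => v vF; rewrite Pvert_first_cut.
Qed.

Lemma left_admissibleP F (c : {set 'I_(nv F)}) :
  left_admissible c -> exists2 k, 0 < k < nv F & c = first_cut F k.
Proof.
rewrite /left_admissible admissibleE.
case/andP=> /and3P[c0 ac ntot] /existsP[k /allP Pk].
have PE : {in fverts F, Pvert c =1 Pvert (first_cut F k)}.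
  by move=> v vF; rewrite Pvert_first_cut // (eqP (Pk v vF)).
exists k; last exact: antichain_eq (first_cut_antichain _ _) PE.
have [i ic] := set0Pn _ c0.
apply/andP; split.
  rewrite lt0n; apply: contraTneq (Pvert_cut ic) => k0.
  by rewrite PE ?vtx_mem // Pvert_first_cut ?vtx_mem // /first_verts k0 take0.
rewrite ltn_neqAle -ltnS ltn_ord andbT; apply: contra ntot => /eqP kn.
rewrite total_cutP // all_count (eq_in_count PE) count_first_cut kn //.
Qed.

(** * The coproduct *)

Import GRing.Theory.
Local Open Scope ring_scope.

Lemma eqseq_catr (T : eqType) (s1 s2 s3 : seq T) : (s1 ++ s3 == s2 ++ s3) = (s1 == s2).
Proof. by rewrite -(can_eq revK) !rev_cat eqseq_cat // eqxx (can_eq revK). Qed.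

Section Tensors.

Variable K : fieldType.
Implicit Types (t : tens K) (x y A B : forest).

Lemma tlmul_ext x t1 t2 : t1 =2 t2 -> tlmul x t1 =2 tlmul x t2.
Proof. by move=> e A B; rewrite /tlmul e. Qed.

Lemma trmul_ext y t1 t2 : t1 =2 t2 -> trmul t1 y =2 trmul t2 y.
Proof. by move=> e A B; rewrite /trmul e. Qed.

Lemma tidB_ext t1 t2 : t1 =2 t2 -> tidB t1 =2 tidB t2.
Proof. by move=> e A [|[S0] [|? ?]]; rewrite /tidB ?e. Qed.

Lemma tlmul_sum x (I : Type) (r : seq I) (P : pred I) (t : I -> tens K) A B :
  tlmul x (fun A' B' => \sum_(i <- r | P i) t i A' B') A B =
  \sum_(i <- r | P i) tlmul x (t i) A B.
Proof. by rewrite /tlmul; case: ifP => // _; rewrite big1. Qed.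

Lemma trmul_sum y (I : Type) (r : seq I) (P : pred I) (t : I -> tens K) A B :
  trmul (fun A' B' => \sum_(i <- r | P i) t i A' B') y A B =
  \sum_(i <- r | P i) trmul (t i) y A B.
Proof. by rewrite /trmul; case: ifP => // _; rewrite big1. Qed.

Lemma tlmul_tsimple x F G A B : tlmul x (tsimple K F G) A B = tsimple K (x ++ F) G A B.
Proof.
rewrite /tlmul /tsimple; case: ifP => [/eqP xA | xA].
  by rewrite -[in RHS](cat_take_drop (size x) A) xA eqseq_cat // eqxx.
by case: eqP => // AxF; rewrite AxF take_size_cat ?eqxx in xA.
Qed.

Lemma trmul_tsimple y F G A B : trmul (tsimple K F G) y A B = tsimple K F (G ++ y) A B.
Proof.
rewrite /trmul /tsimple; case: ifP => [/andP[yB /eqP By] | yB].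
  rewrite -[in RHS](cat_take_drop (size B - size y) B) By.
  by rewrite eqseq_catr.
case: (B =P G ++ y) => [BGy|]; last by rewrite andbF.
by rewrite BGy size_cat leq_addl addnK drop_size_cat ?eqxx in yB.
Qed.

Lemma tidB_sum (I : Type) (r : seq I) (P : pred I) (t : I -> tens K) A B :
  tidB (fun A' B' => \sum_(i <- r | P i) t i A' B') A B =
  \sum_(i <- r | P i) tidB (t i) A B.
Proof. by case: B => [|[S0] [|? ?]]; rewrite /tidB // big1. Qed.

Lemma tidB_tsimple F G A B : tidB (tsimple K F G) A B = tsimple K F [:: Node G] A B.
Proof.
have Node_eq S : (Node S == Node G) = (S == G) by apply/eqP/eqP => [[] | ->].
rewrite /tidB /tsimple.
by case: B => [|[S0] [|? ?]] //; rewrite ?eqseq_cons ?Node_eq /= ?andbF ?andbT.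
Qed.

Definition split_tensor F : tens K := fun A B =>
  \sum_(0 <= k < (forest_size F).+1) tsimple K (fsplit F k).1 (fsplit F k).2 A B.

Lemma split_tensor_nil : split_tensor [::] =2 tsimple K [::] [::].
Proof. by move=> A B; rewrite /split_tensor big_nat1. Qed.

Lemma split_tensor_Bplus x : split_tensor [:: Bplus x] =2
  fun A B => tsimple K [:: Bplus x] [::] A B + tidB (split_tensor x) A B.
Proof.
move=> A B; rewrite /split_tensor /Bplus tidB_sum forest_size_cons addn0.
rewrite big_nat_recr // addrC fsplit_cons ltnn subnn fsplit0; congr (_ + _).
by apply: eq_big_nat => k /andP[_ lt_k]; rewrite tidB_tsimple fsplit_cons lt_k.
Qed.

Lemma split_tensor_cons ts G : split_tensor (Node ts :: G) =2
  fun A B => tlmul [:: Node ts] (split_tensor G) A B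
             + trmul (split_tensor [:: Node ts]) G A B - tsimple K [:: Node ts] G A B.
Proof.
move=> A B; rewrite /split_tensor tlmul_sum trmul_sum.
rewrite [X in _ + X - _]big_nat_recr // trmul_tsimple.
rewrite fsplit_size cat0s -addrA addrK !forest_size_cons addn0 -addnS.
rewrite (big_cat_nat (leq0n _) (leq_addr _ _)) addrC; congr (_ + _).
- by apply: eq_big_nat => k /andP[_ lt_k]; rewrite trmul_tsimple !fsplit_cons lt_k.
- rewrite -{1}[(forest_size ts).+1]add0n big_addn addKn.
  apply: eq_big_nat => j _; rewrite tlmul_tsimple fsplit_cons ltnNge leq_addl /=.
  by rewrite addnK.
Qed.

Lemma is_Delta_unique D : is_Delta D -> forall F, D F =2 split_tensor F.
Proof.
case=> D_nil D_cat D_Bplus F; have [n] := ubnP (forest_size F).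
elim: n F => // n IH [|[ts] [|t G]] ltF A B.
- by rewrite D_nil split_tensor_nil.
- rewrite -[Node ts]/(Bplus ts) D_Bplus split_tensor_Bplus; congr (_ + _).
  by apply: tidB_ext => A' B'; apply: IH; rewrite forest_size_cons in ltF; lia.
- rewrite -cat1s D_cat cat1s split_tensor_cons; congr (_ + _ - _).
  + by apply: tlmul_ext => A' B'; apply: IH; rewrite forest_size_cons in ltF; lia.
  + apply: trmul_ext => A' B'; apply: IH; case: t ltF => s.
    by rewrite !forest_size_cons addn0; lia.
Qed.

End Tensors.

Lemma sum_left_admissible (K : fieldType) F (g : forest -> forest -> K) :
  \sum_(c : {set 'I_(nv F)} | left_admissible c) g (Pcut c) (Rcut c) =
  \sum_(1 <= k < nv F) g (fsplit F k).1 (fsplit F k).2.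
Proof.
pose ks := [set k : 'I_(nv F) | (0 < k)%N].
have LA (c : {set 'I_(nv F)}) :
    left_admissible c = (c \in [set first_cut F k | k : 'I_(nv F) in ks]).
  apply/idP/imsetP => [/left_admissibleP[k /andP[k_gt0 k_lt] ->] | [k]].
    by exists (Ordinal k_lt); rewrite ?inE.
  by rewrite inE => k_gt0 ->; apply: first_cut_left_admissible; rewrite k_gt0 /=.
rewrite (eq_bigl _ _ LA) big_imset /=; last first.
  move=> k1 k2 _ _ /(congr1 (fun c => count (Pvert c) (fverts F))).
  by rewrite !count_first_cut 1?ltnW //; apply: val_inj.
rewrite (eq_bigr (fun k : 'I_(nv F) => g (fsplit F k).1 (fsplit F k).2)); last first.
  by move=> k _; rewrite -(first_cut_split (ltnW (ltn_ord k))).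
rewrite (eq_bigl (fun k : 'I_(nv F) => (0 < k)%N)); last by move=> k; rewrite inE.
rewrite -(big_mkord (fun k => (0 < k)%N) (fun k => g (fsplit F k).1 (fsplit F k).2)).
case: (posnP (nv F)) => [-> | nv_gt0]; first by rewrite !big_geq.
rewrite big_ltn_cond //= big_nat_cond [RHS]big_nat_cond.
by apply: eq_bigl => -[|i]; rewrite ?andbT.
Qed.

Theorem proposition10 (K : fieldType) (D : forest -> forest -> forest -> K) :
  is_Delta D ->
  forall F : forest, F != [::] ->
  forall A B : forest,
    D F A B =
      \sum_(c : {set 'I_(nv F)} | left_admissible c)
          ((Pcut c == A) && (Rcut c == B))%:R
      + tsimple K F [::] A B + tsimple K [::] F A B.
Proof.
move=> isD F F0 A B; rewrite (is_Delta_unique isD) /split_tensor -nvE.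
have nv_gt0 : (0 < nv F)%N.
  by rewrite nvE; case: F F0 => // -[ts] G _; rewrite forest_size_cons.
have split_nv : fsplit F (nv F) = (F, [::]) by rewrite nvE fsplit_size.
rewrite big_nat_recr // big_ltn // fsplit0 split_nv [RHS]addrC [RHS]addrA.
congr (_ + _ + _).
rewrite (sum_left_admissible F (fun P R => ((P == A) && (R == B))%:R)).
by apply: eq_bigr => k _; rewrite /tsimple [A == _]eq_sym [B == _]eq_sym.
Qed.
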